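(* Let $\Omega\in\mathscr A$ be a $1$-admissible set with $\mathfrak m(\Omega)\in(0,+\infty)$ and $\mathscr C_1(\Omega)\neq\emptyset$. If (P.4) and (P.5) hold, then there exist $1$-Cheeger sets of $\Omega$ of maximal $\mathfrak m$-measure among all $1$-Cheeger sets of $\Omega$. If moreover (P.3) holds, then there is a unique (up to $\mathfrak m$-negligible sets) $1$-Cheeger set $E^+$ of maximal measure, and $E\subset E^+$ (i.e. $\mathfrak m(E\setminus E^+)=0$) for every $E\in\mathscr C_1(\Omega)$.
   Context: $(X,\mathscr A,\mathfrak m)$ is a non-negative $\sigma$-finite measure space; for $A,B\in\mathscr A$, ''$A\subset B$'' means $\mathfrak m(A\setminus B)=0$. $P\colon\mathscr A\to[0,+\infty]$ is a proper functional. (P.3): $P(E\cap F)+P(E\cup F)\le P(E)+P(F)$. (P.4): if $\chi_{E_k}\to\chi_E$ in $L^1(X,\mathfrak m)$ then $P(E)\le\liminf_k P(E_k)$. (P.5): for every $c\ge0$, $\{\chi_E:E\in\mathscr A,\ P(E)\le c\}$ is compact in $L^1(X,\mathfrak m)$. $\Omega$ is $1$-admissible if it contains some $E$ with $0<\mathfrak m(E)<+\infty$, $P(E)<+\infty$; $h_1(\Omega)=\inf\{P(E)/\mathfrak m(E): E\subset\Omega,\ 0<\mathfrak m(E)<+\infty,\ P(E)<+\infty\}$; minimizers are $1$-Cheeger sets, forming $\mathscr C_1(\Omega)$. *)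

From HB Require Import structures.
From mathcomp Require Import all_boot all_order all_algebra.
From mathcomp Require Import all_classical all_reals all_analysis.
Set Implicit Arguments. Unset Strict Implicit. Unset Printing Implicit Defensive.
Import Order.TTheory GRing.Theory Num.Theory.
Local Open Scope classical_set_scope.
Local Open Scope ring_scope.
Local Open Scope ereal_scope.

Section Cheeger.
Context {d : measure_display} {X : measurableType d} {R : realType}.
Variables (mu : {measure set X -> \bar R}) (P : set X -> \bar R).

Definition ae_sub (A B : set X) : Prop := mu (A `\` B) = 0.

Definition indic_L1_cvg (E : nat -> set X) (F : set X) : Prop :=
  (fun k => \int[mu]_x (`| \1_(E k) x - \1_F x |)%:E) @ \oo --> 0.

Definition proper_functional : Prop := exists E, measurable E /\ P E < +oo.

Definition P3 : Prop := forall E F, measurable E -> measurable F ->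
  P (E `&` F) + P (E `|` F) <= P E + P F.

Definition P4 : Prop := forall (E : nat -> set X) (F : set X),
  (forall k, measurable (E k)) -> measurable F -> indic_L1_cvg E F ->
  P F <= limn_einf (fun k => P (E k)).

(* (P.5) for every c >= 0, {chi_E : E in A, P(E) <= c} (as a subset of
   L^1, i.e. mu(E) < +oo) is (sequentially) compact in L^1(X, mu) *)
Definition P5 : Prop := forall c : R, (0 <= c)%R ->
  forall E : nat -> set X,
    (forall k, measurable (E k) /\ mu (E k) < +oo /\ P (E k) <= c%:E) ->
    exists (phi : nat -> nat) (F : set X),
      {homo phi : m n / (m < n)%N >-> (m < n)%N} /\
      measurable F /\ mu F < +oo /\ P F <= c%:E /\
      indic_L1_cvg (fun k => E (phi k)) F.

Definition cheeger_cands (Om : set X) : set (set X) :=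
  [set E | measurable E /\ ae_sub E Om /\ 0 < mu E /\ mu E < +oo /\ P E < +oo].

Definition admissible1 (Om : set X) : Prop := cheeger_cands Om !=set0.

(* P(E)/m(E), for E with finite P(E) and finite positive m(E) *)
Definition ratio (E : set X) : \bar R := ((fine (P E)) / (fine (mu E)))%:E.

Definition h1 (Om : set X) : \bar R := ereal_inf [set ratio E | E in cheeger_cands Om].

Definition cheeger1 (Om : set X) : set (set X) :=
  [set E | cheeger_cands Om E /\ ratio E = h1 Om].

End Cheeger.

From Pilot Require Import Defs.
From HB Require Import structures.
From mathcomp Require Import all_boot all_order all_algebra.
From mathcomp Require Import all_classical all_reals all_analysis.
From mathcomp Require Import measurable_realfun.
Set Implicit Arguments.
Unset Strict Implicit.
Unset Printing Implicit Defensive.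
Import Order.TTheory GRing.Theory Num.Theory.
Local Open Scope classical_set_scope.
Local Open Scope ring_scope.
Local Open Scope ereal_scope.

(* Along a maximizing sequence of 1-Cheeger sets the perimeters stay below
   h_1(Om) m(Om), so (P.5) extracts a subsequence converging in L^1 to some F.
   Convergence of the indicators carries the measures and the a.e. inclusion in
   Om over to F, and (P.4) gives P(F) <= h_1(Om) m(F): F is a Cheeger set of
   maximal measure.  Under (P.3) the union of two Cheeger sets E, F is Cheeger,
   because P(E u F) + P(E n F) <= h_1 (m(E u F) + m(E n F)) while
   h_1 m(E n F) <= P(E n F).  Hence for a maximal F, m(E u F) <= m(F) forces
   m(E \ F) = 0 for every Cheeger set E, and two maximal sets coincide a.e. *)

Section ae_inclusion.
Context {d : measure_display} {X : measurableType d} {R : realType}.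
Variable mu : {measure set X -> \bar R}.

Lemma measureD_triangle A B C : measurable A -> measurable B -> measurable C ->
  mu (A `\` C) <= mu (A `\` B) + mu (B `\` C).
Proof.
move=> mA mB mC; apply: le_trans (measureU2 _ (measurableD mA mB) (measurableD mB mC)).
apply: le_measure; rewrite ?inE; do ?[exact: measurableD | apply: measurableU].
by move=> x [Ax Cx]; have [Bx|Bx] := pselect (B x); [right|left].
Qed.

Lemma ae_sub_le A B : measurable A -> measurable B -> ae_sub mu A B -> mu A <= mu B.
Proof.
move=> mA mB AB; rewrite -(measureU0 mB (measurableD mA mB) AB).
apply: le_measure; rewrite ?inE //; first by apply: measurableU => //; exact: measurableD.
by move=> x Ax; have [Bx|Bx] := pselect (B x); [left|right].
Qed.

Lemma ae_subU A B C : measurable A -> measurable B -> measurable C ->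
  ae_sub mu A C -> ae_sub mu B C -> ae_sub mu (A `|` B) C.
Proof.
move=> mA mB mC AsubC BsubC; rewrite /ae_sub setDUl measureU0 //; exact: measurableD.
Qed.

Lemma ae_subIl A B C : measurable A -> measurable B -> measurable C ->
  ae_sub mu A C -> ae_sub mu (A `&` B) C.
Proof.
move=> mA mB mC AsubC; apply: (subset_measure0 _ _ _ AsubC); last exact: setSD (@subIsetl _ A B).
  by apply: measurableD => //; exact: measurableI.
exact: measurableD.
Qed.

Lemma measureUD A B : measurable A -> measurable B ->
  mu (A `|` B) = mu (A `\` B) + mu B.
Proof.
move=> mA mB; rewrite -measureU ?setDKI //; last exact: measurableD.
by congr (mu _); apply/seteqP; split => x /=; have [Bx|Bx] := pselect (B x); tauto.
Qed.

Lemma measureIU A B : measurable A -> measurable B ->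
  mu (A `&` B) + mu (A `|` B) = mu A + mu B.
Proof.
by move=> mA mB; rewrite measureUD // addeA [mu (A `&` B) + _]addeC -measureDI.
Qed.

End ae_inclusion.

Section indicator_distance.
Context {d : measure_display} {X : measurableType d} {R : realType}.
Variable mu : {measure set X -> \bar R}.

Definition indic_dist (A B : set X) : \bar R :=
  \int[mu]_x (`| \1_A x - \1_B x |)%:E.

Lemma indic_distC A B : indic_dist A B = indic_dist B A.
Proof. by apply: eq_integral => x _; rewrite distrC. Qed.

Lemma measureD_le_indic_dist A B : measurable A -> measurable B ->
  mu (A `\` B) <= indic_dist A B.
Proof.
move=> mA mB; have mAB := measurableD mA mB.
have := integral_indic mu measurableT mAB; rewrite setIT => <-.
apply: ge0_le_integral => //.
- by apply/measurable_EFinP; exact: measurable_indic.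
- apply/measurable_EFinP; apply: measurableT_comp => //.
  by apply: measurable_funB; exact: measurable_indic.
move=> x _; rewrite lee_fin !indicE in_setD.
by case: (x \in A); case: (x \in B); rewrite /= ?subrr ?normr0 ?subr0 ?sub0r ?normrN ?normr1.
Qed.

Lemma measure_le_indic_dist A B : measurable A -> measurable B ->
  mu A <= mu B + indic_dist A B.
Proof.
move=> mA mB; rewrite (measureDI mu mA mB) addeC.
apply: leeD; last exact: measureD_le_indic_dist.
by apply: le_measure; rewrite ?inE //; exact: measurableI.
Qed.

Lemma indic_L1_cvg_measure (E : nat -> set X) F :
  (forall k, measurable (E k)) -> measurable F -> mu F < +oo ->
  indic_L1_cvg mu E F -> mu (E k) @[k --> \oo] --> mu F.
Proof.
move=> mE mF Ffin cvgE.
have Ffin_num : mu F \is a fin_num by rewrite ge0_fin_numE.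
have dist_fin := cvg_is_fine cvgE.
apply: (squeeze_cvge (f := fun k => mu F - indic_dist (E k) F)
                     (h := fun k => mu F + indic_dist (E k) F)).
- near=> k; rewrite leeBlDr; last by near: k.
  rewrite measure_le_indic_dist //= indic_distC measure_le_indic_dist //.
- rewrite -[X in _ --> X]sube0.
  by apply: cvgeB; [rewrite fin_num_adde_defl | exact: cvg_cst | exact: cvgE].
- rewrite -[X in _ --> X]adde0.
  by apply: cvgeD; [rewrite fin_num_adde_defl | exact: cvg_cst | exact: cvgE].
Unshelve. all: by end_near.
Qed.

Lemma indic_L1_cvg_ae_sub (E : nat -> set X) F Om :
  (forall k, measurable (E k)) -> measurable F -> measurable Om ->
  (forall k, ae_sub mu (E k) Om) -> indic_L1_cvg mu E F -> ae_sub mu F Om.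
Proof.
move=> mE mF mOm EOm cvgE; apply/eqP; rewrite -measure_le0.
have bound k : mu (F `\` Om) <= indic_dist (E k) F.
  rewrite (le_trans (measureD_triangle mu mF (mE k) mOm)) // [mu (E k `\` Om)]EOm adde0.
  by rewrite indic_distC measureD_le_indic_dist.
have : mu (F `\` Om) <= lim (indic_dist (E k) F @[k --> \oo]).
  by apply: lime_ge; [exact: cvgP cvgE | exact: nearW].
by rewrite (cvg_lim _ cvgE).
Qed.

End indicator_distance.

Lemma cvgn_strictly_increasing (phi : nat -> nat) :
  {homo phi : m n / (m < n)%N >-> (m < n)%N} -> phi @ \oo --> \oo.
Proof.
move=> phi_incr; have phi_ge k : (k <= phi k)%N.
  by elim: k => // k IH; exact: leq_ltn_trans IH (phi_incr _ _ (ltnSn k)).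
by move=> A [n _ An]; exists n => // k /= nk; apply: An; exact: leq_trans nk (phi_ge k).
Qed.

Lemma ereal_sup_image_seq {R : realType} {T : Type} (f : T -> \bar R) (C : set T) :
  C !=set0 ->
  exists u : nat -> T, (forall k, C (u k)) /\ f (u k) @[k --> \oo] --> ereal_sup (f @` C).
Proof.
move=> [x Cx]; have [|v fCv v_cvg] := @ereal_sup_seq _ (f @` C).
  by apply/set0P; exists (f x), x.
have /choice[u uP] k : exists t, C t /\ f t = v k by have [t Ct <-] := fCv k; exists t.
exists u; split => [k|]; first exact: (uP k).1.
by rewrite (_ : (fun k => f (u k)) = v) //; apply/funext => k; exact: (uP k).2.
Qed.

Section cheeger_sets.
Context {d : measure_display} {X : measurableType d} {R : realType}.
Variables (mu : {measure set X -> \bar R}) (P : set X -> \bar R) (Om : set X).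
Hypotheses (P_ge0 : forall E, measurable E -> 0 <= P E) (mOm : measurable Om).

Lemma h1_ge0 : 0 <= h1 mu P Om.
Proof.
apply/ereal_infP => _ [E [mE _] <-].
by rewrite lee_fin divr_ge0 // fine_ge0 // ?P_ge0 ?measure_ge0.
Qed.

Lemma cheeger_cands_fin_num E : cheeger_cands mu P Om E ->
  [/\ P E \is a fin_num, mu E \is a fin_num & (0 < fine (mu E))%R].
Proof.
case=> mE [_ [Epos [Efin Pfin]]].
have mu_fin : mu E \is a fin_num by rewrite ge0_fin_numE.
by split; rewrite ?ge0_fin_numE ?P_ge0 // -lte_fin fineK.
Qed.

Lemma ratio_geE E (r : R) : cheeger_cands mu P Om E ->
  (r%:E <= Defs.ratio mu P E) = (r%:E * mu E <= P E).
Proof.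
move=> /cheeger_cands_fin_num[Pfin mu_fin mu_gt0].
by rewrite -(fineK Pfin) -(fineK mu_fin) /Defs.ratio !lee_fin ler_pdivlMr.
Qed.

Lemma ratio_leE E (r : R) : cheeger_cands mu P Om E ->
  (Defs.ratio mu P E <= r%:E) = (P E <= r%:E * mu E).
Proof.
move=> /cheeger_cands_fin_num[Pfin mu_fin mu_gt0].
by rewrite -(fineK Pfin) -(fineK mu_fin) /Defs.ratio !lee_fin ler_pdivrMr.
Qed.

Variable h : R.
Hypothesis h1E : h1 mu P Om = h%:E.

Let h_ge0 : (0 <= h)%R.
Proof. by rewrite -lee_fin -h1E h1_ge0. Qed.

Lemma h1_mul_le E : measurable E -> ae_sub mu E Om -> mu E < +oo ->
  h%:E * mu E <= P E.
Proof.
move=> mE EOm Efin; have := measure_ge0 mu E; rewrite le_eqVlt => /predU1P[<-|Epos].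
  by rewrite mule0 P_ge0.
have [Pfin|] := ltP (P E) +oo; last by rewrite leye_eq => /eqP ->; exact: leey.
have cE : cheeger_cands mu P Om E by [].
by rewrite -ratio_geE // -h1E; apply: ereal_inf_lbound; exists E.
Qed.

Lemma cheeger1_mulE E : cheeger1 mu P Om E -> P E = h%:E * mu E.
Proof.
move=> [cE ratioE]; apply/le_anti; rewrite -ratio_leE // ratioE h1E lexx /=.
by case: cE => mE [EOm [_ [Efin _]]]; exact: h1_mul_le.
Qed.

Lemma cheeger1_le E : cheeger_cands mu P Om E -> P E <= h%:E * mu E ->
  cheeger1 mu P Om E.
Proof.
move=> cE PE; split => //; apply/le_anti; rewrite h1E ratio_leE // PE /= -h1E.
by apply: ereal_inf_lbound; exists E.
Qed.

Lemma cheeger1U E F : P3 P -> cheeger1 mu P Om E -> cheeger1 mu P Om F ->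
  cheeger1 mu P Om (E `|` F).
Proof.
move=> P3P chE chF.
have [[mE [EOm [Epos [Efin PEfin]]]] _] := chE.
have [[mF [FOm [_ [Ffin PFfin]]]] _] := chF.
have mEIF : measurable (E `&` F) by exact: measurableI.
have mEUF : measurable (E `|` F) by exact: measurableU.
have submod := P3P E F mE mF.
have PEFfin : P E + P F < +oo := lte_add_pinfty PEfin PFfin.
have PEIF_fin : P (E `&` F) \is a fin_num.
  rewrite ge0_fin_numE ?P_ge0 //; apply: le_lt_trans PEFfin.
  by apply: le_trans submod; rewrite leeDl ?P_ge0.
have EUFfin : mu (E `|` F) < +oo.
  exact: le_lt_trans (measureU2 mu mE mF) (lte_add_pinfty Efin Ffin).
have EUF_Om : ae_sub mu (E `|` F) Om by exact: ae_subU.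
have EUFpos : 0 < mu (E `|` F).
  by apply: lt_le_trans Epos _; apply: le_measure; rewrite ?inE.
have PEUFfin : P (E `|` F) < +oo.
  by apply: le_lt_trans PEFfin; apply: le_trans submod; rewrite leeDr ?P_ge0.
apply: cheeger1_le; first by do !split.
rewrite -(leeD2lE _ _ PEIF_fin); apply: le_trans submod _.
rewrite (cheeger1_mulE chE) (cheeger1_mulE chF) -ge0_muleDr // -measureIU //.
rewrite ge0_muleDr // leeD2r //; apply: h1_mul_le => //; first exact: ae_subIl.
by apply: le_lt_trans Efin; apply: le_measure; rewrite ?inE.
Qed.

Lemma cheeger1_ae_sub_max E F : P3 P -> cheeger1 mu P Om F ->
  (forall G, cheeger1 mu P Om G -> mu G <= mu F) ->
  cheeger1 mu P Om E -> ae_sub mu E F.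
Proof.
move=> P3P chF Fmax chE.
have [[mE _] _] := chE; have [[mF [_ [_ [Ffin _]]]] _] := chF.
have := Fmax _ (cheeger1U P3P chE chF).
by rewrite measureUD // -[leRHS]add0e leeD2rE ?ge0_fin_numE // measure_le0 => /eqP.
Qed.

Lemma cheeger1_closed (E : nat -> set X) F : P4 mu P ->
  (forall k, cheeger1 mu P Om (E k)) -> measurable F -> 0 < mu F -> mu F < +oo ->
  indic_L1_cvg mu E F -> cheeger1 mu P Om F.
Proof.
move=> P4P chE mF Fpos Ffin cvgE.
have mE k : measurable (E k) by have [[]] := chE k.
have PF : P F <= h%:E * mu F.
  apply: le_trans (P4P _ _ mE mF cvgE) _.
  rewrite (_ : (fun k => P (E k)) = (fun k => h%:E * mu (E k))); last first.
    by apply/funext => k; exact: cheeger1_mulE.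
  by rewrite (cvg_limn_einf_sup (cvgeZl _ (indic_L1_cvg_measure mE mF Ffin cvgE))).1.
have F_Om : ae_sub mu F Om.
  by apply: (indic_L1_cvg_ae_sub mE mF mOm _ cvgE) => k; have [[_ []]] := chE k.
have PFfin : P F < +oo by apply: le_lt_trans PF _; rewrite lte_mul_pinfty ?lee_fin.
by apply: cheeger1_le => //; do !split.
Qed.

Lemma cheeger1_max_exists : P4 mu P -> P5 mu P -> mu Om < +oo ->
  cheeger1 mu P Om !=set0 ->
  exists F, cheeger1 mu P Om F /\ forall E, cheeger1 mu P Om E -> mu E <= mu F.
Proof.
move=> P4P P5P Omfin [E0 chE0].
have Om_fin_num : mu Om \is a fin_num by rewrite ge0_fin_numE.
have [E [chE cvg_sup]] := ereal_sup_image_seq mu (ex_intro _ E0 chE0).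
have P5_hyp k :
    measurable (E k) /\ mu (E k) < +oo /\ P (E k) <= (h * fine (mu Om))%:E.
  have [[mE [EOm [_ [Efin _]]]] _] := chE k; do 2!split=> //.
  rewrite cheeger1_mulE // EFinM fineK // lee_wpmul2l ?lee_fin //.
  exact: ae_sub_le.
have [phi [F [phi_incr [mF [Ffin [_ cvgF]]]]]] :=
  P5P _ (mulr_ge0 h_ge0 (fine_ge0 (measure_ge0 _ _))) _ P5_hyp.
have mE k : measurable (E (phi k)) by have [] := P5_hyp (phi k).
have muF : mu F = ereal_sup [set mu E | E in cheeger1 mu P Om].
  apply: (cvg_unique _ (indic_L1_cvg_measure mE mF Ffin cvgF)); first exact: ereal_hausdorff.
  exact: (cvg_comp phi (mu \o E) (cvgn_strictly_increasing phi_incr) cvg_sup).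
have Fmax G : cheeger1 mu P Om G -> mu G <= mu F.
  by move=> chG; rewrite muF; apply: ereal_sup_ubound; exists G.
exists F; split => //; apply: (cheeger1_closed P4P (fun k => chE (phi k))) => //.
by have [[_ [_ [E0pos _]]] _] := chE0; exact: lt_le_trans E0pos (Fmax _ chE0).
Qed.

End cheeger_sets.

Theorem proposition3p13 (d : measure_display) (X : measurableType d) (R : realType)
  (mu : {measure set X -> \bar R}) (P : set X -> \bar R)
  (mu_sfin : sigma_finite setT mu)
  (P_ge0 : forall E, measurable E -> 0 <= P E)
  (P_proper : proper_functional P)
  (Om : set X) (mOm : measurable Om)
  (Om_adm : admissible1 mu P Om)
  (Om_pos : 0 < mu Om) (Om_fin : mu Om < +oo)
  (C_ne : cheeger1 mu P Om !=set0) :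
  P4 mu P -> P5 mu P ->
  (exists E, cheeger1 mu P Om E /\ forall F, cheeger1 mu P Om F -> mu F <= mu E) /\
  (P3 P ->
   exists Ep, cheeger1 mu P Om Ep /\
     (forall F, cheeger1 mu P Om F -> mu F <= mu Ep) /\
     (forall F, cheeger1 mu P Om F ->
        (forall G, cheeger1 mu P Om G -> mu G <= mu F) ->
        mu ((F `\` Ep) `|` (Ep `\` F)) = 0) /\
     (forall E, cheeger1 mu P Om E -> ae_sub mu E Ep)).
Proof.
move=> P4P P5P.
have [E0 [_ h1E0]] := C_ne.
have h1E : h1 mu P Om = (fine (h1 mu P Om))%:E by rewrite -h1E0.
have [Ep [chEp Ep_max]] := cheeger1_max_exists P_ge0 mOm h1E P4P P5P Om_fin C_ne.
split; first by exists Ep.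
move=> P3P; have Ep_sub := cheeger1_ae_sub_max P_ge0 mOm h1E P3P chEp Ep_max.
exists Ep; do 3!split => //.
move=> F chF F_max; have [[mF _] _] := chF; have [[mEp _] _] := chEp.
rewrite measureU0; [exact: Ep_sub | exact: measurableD..|].
exact (cheeger1_ae_sub_max P_ge0 mOm h1E P3P chF F_max chEp).
Qed.
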